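(* Let $\mathfrak K=(K,\bigsqcup,\odot,{}^*,{\sim},e)$ be an involutive generalized dynamic algebra. Then the map $K\to\widetilde K$, $x\mapsto{\sim}{\sim}x$, is a surjective homomorphism of left $K$-modules (where $K$ is a left module over itself via $\odot$ and $\widetilde K$ carries the join $\bigvee$ and action $\bullet$), and $\equiv$ is a quantale congruence on $K$.
   Context: An involutive unital quantale is $(Q,\bigsqcup,\odot,{}^*,e)$: $Q$ a complete join-semilattice, $\odot$ associative and distributing over arbitrary joins in each argument, $e$ a unit, ${}^*$ with $x^{**}=x$, $(x\odot y)^*=y^*\odot x^*$, $(\bigsqcup_i x_i)^*=\bigsqcup_i x_i^*$. An involutive generalized dynamic algebra is $\mathfrak K=(K,\bigsqcup,\odot,{}^*,{\sim},e)$ with $(K,\bigsqcup,\odot,{}^*,e)$ an involutive unital quantale and ${\sim}\colon K\to K$ such that for all $x,y\in K$ and families $(x_i)$: ${\sim}(x\odot{\sim}{\sim}y)={\sim}(x\odot y)$; ${\sim}(\bigsqcup_i{\sim}{\sim}x_i)={\sim}(\bigsqcup_i x_i)$; $({\sim}x)^*={\sim}x$; ${\sim}{\sim}({\sim}{\sim}x\odot y)={\sim}({\sim}x\sqcup{\sim}({\sim}x\sqcup y))$. Test set $\widetilde K=\{{\sim}k\mid k\in K\}$; $\bigvee W={\sim}{\sim}(\bigsqcup W)$ for $W\subseteq\widetilde K$; action $k\bullet v={\sim}{\sim}(k\odot v)$ for $k\in K$, $v\in\widetilde K$ (this makes $(\widetilde K,\bigvee,\bullet)$ a left $K$-module). $k\equiv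 l$ iff $k\bullet w=l\bullet w$ for all $w\in\widetilde K$. A homomorphism of left $K$-modules preserves arbitrary joins and the action. A quantale congruence is an equivalence relation preserving arbitrary joins and multiplication (if $x_i\equiv y_i$ for all $i$ then $\bigsqcup x_i\equiv\bigsqcup y_i$; if $u\equiv v$, $s\equiv t$ then $u\odot s\equiv v\odot t$). *)

Set Implicit Arguments.
Section Defs.
Variable K : Type.

Definition fsup (sup : (K -> Prop) -> K) {I : Type} (x : I -> K) : K :=
  sup (fun k => exists i, x i = k).

Definition is_complete_join_semilattice (le : K -> K -> Prop)
    (sup : (K -> Prop) -> K) : Prop :=
  (forall x, le x x) /\
  (forall x y, le x y -> le y x -> x = y) /\
  (forall x y z, le x y -> le y z -> le x z) /\
  (forall S x, S x -> le x (sup S)) /\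
  (forall S u, (forall x, S x -> le x u) -> le (sup S) u).

Definition is_involutive_unital_quantale (le : K -> K -> Prop)
    (sup : (K -> Prop) -> K) (mul : K -> K -> K) (star : K -> K) (e : K) : Prop :=
  is_complete_join_semilattice le sup /\
  (forall x y z, mul x (mul y z) = mul (mul x y) z) /\
  (forall (I : Type) (x : I -> K) a,
      mul a (fsup sup x) = fsup sup (fun i => mul a (x i))) /\
  (forall (I : Type) (x : I -> K) a,
      mul (fsup sup x) a = fsup sup (fun i => mul (x i) a)) /\
  (forall x, mul e x = x) /\ (forall x, mul x e = x) /\
  (forall x, star (star x) = x) /\
  (forall x y, star (mul x y) = mul (star y) (star x)) /\
  (forall (I : Type) (x : I -> K),
      star (fsup sup x) = fsup sup (fun i => star (x i))).

Definition is_IGDA (le : K -> K -> Prop) (sup : (K -> Prop) -> K)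
    (mul : K -> K -> K) (star : K -> K) (neg : K -> K) (e : K) : Prop :=
  is_involutive_unital_quantale le sup mul star e /\
  (forall x y, neg (mul x (neg (neg y))) = neg (mul x y)) /\
  (forall (I : Type) (x : I -> K),
      neg (fsup sup (fun i => neg (neg (x i)))) = neg (fsup sup x)) /\
  (forall x, star (neg x) = neg x) /\
  (forall x y, neg (neg (mul (neg (neg x)) y))
               = neg (sup (fun k => k = neg x \/ k = neg (sup (fun l => l = neg x \/ l = y))))).

Definition test_set (neg : K -> K) (v : K) : Prop := exists k, v = neg k.

Definition tjoin (sup : (K -> Prop) -> K) (neg : K -> K) {I : Type} (w : I -> K) : K :=
  neg (neg (fsup sup w)).

Definition tact (mul : K -> K -> K) (neg : K -> K) (k v : K) : K :=
  neg (neg (mul k v)).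

Definition test_equiv (mul : K -> K -> K) (neg : K -> K) (k l : K) : Prop :=
  forall w, test_set neg w -> tact mul neg k w = tact mul neg l w.

Definition is_left_module_hom_to_tests (sup : (K -> Prop) -> K) (mul : K -> K -> K)
    (neg : K -> K) (f : K -> K) : Prop :=
  (forall x, test_set neg (f x)) /\
  (forall (I : Type) (x : I -> K),
      f (fsup sup x) = tjoin sup neg (fun i => f (x i))) /\
  (forall k x, f (mul k x) = tact mul neg k (f x)).

Definition is_quantale_congruence (sup : (K -> Prop) -> K) (mul : K -> K -> K)
    (R : K -> K -> Prop) : Prop :=
  (forall x, R x x) /\ (forall x y, R x y -> R y x) /\
  (forall x y z, R x y -> R y z -> R x z) /\
  (forall (I : Type) (x y : I -> K), (forall i, R (x i) (y i)) ->
      R (fsup sup x) (fsup sup y)) /\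
  (forall u v s t, R u v -> R s t -> R (mul u s) (mul v t)).

End Defs.

(* Everything follows from two absorption laws of an involutive generalized
   dynamic algebra: a double negation may be dropped inside [~~(k ⊙ _)] and
   inside [~~(⊔ _)].  Taking [k = e] gives [~~~ = ~], so [~~] fixes every test
   and maps [K] onto the tests; the absorption laws then say exactly that [~~]
   preserves joins and the action.  Moreover [(u ⊙ s) • w = u • (s • w)], so
   [≡], the kernel of [k ↦ (w ↦ k • w)], is compatible with products, and it is
   compatible with joins because [⊙] distributes over joins in its left
   argument. *)

From Stdlib Require Import FunctionalExtensionality.

Section TestAlgebra.

Variables (K : Type) (sup : (K -> Prop) -> K) (mul : K -> K -> K)
  (neg : K -> K) (e : K).

Hypothesis mulA : forall x y z, mul x (mul y z) = mul (mul x y) z.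
Hypothesis mul_fsupl : forall (I : Type) (x : I -> K) a,
  mul (fsup sup x) a = fsup sup (fun i => mul (x i) a).
Hypothesis mul1l : forall x, mul e x = x.
Hypothesis neg_mul_negneg : forall x y, neg (mul x (neg (neg y))) = neg (mul x y).
Hypothesis neg_fsup_negneg : forall (I : Type) (x : I -> K),
  neg (fsup sup (fun i => neg (neg (x i)))) = neg (fsup sup x).

Lemma negnegneg (x : K) : neg (neg (neg x)) = neg x.
Proof.
  pose proof (neg_mul_negneg e x) as E.
  rewrite !mul1l in E. exact E.
Qed.

Lemma negneg_test (v : K) : test_set neg v -> neg (neg v) = v.
Proof. intros [k ->]. apply negnegneg. Qed.

Lemma tact_negneg (k x : K) : tact mul neg k (neg (neg x)) = tact mul neg k x.
Proof. unfold tact. rewrite neg_mul_negneg. reflexivity. Qed.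

Lemma tjoin_negneg (I : Type) (x : I -> K) :
  tjoin sup neg (fun i => neg (neg (x i))) = neg (neg (fsup sup x)).
Proof. unfold tjoin. rewrite neg_fsup_negneg. reflexivity. Qed.

Lemma tact_mul (u s w : K) :
  tact mul neg (mul u s) w = tact mul neg u (tact mul neg s w).
Proof. unfold tact. rewrite neg_mul_negneg, mulA. reflexivity. Qed.

Lemma negneg_fsup_congr (I : Type) (x y : I -> K) :
  (forall i, neg (neg (x i)) = neg (neg (y i))) ->
  neg (neg (fsup sup x)) = neg (neg (fsup sup y)).
Proof.
  intros Exy.
  rewrite <- !tjoin_negneg.
  unfold tjoin. f_equal. f_equal. f_equal.
  apply functional_extensionality. exact Exy.
Qed.

Theorem negneg_module_hom :
  is_left_module_hom_to_tests sup mul neg (fun x => neg (neg x)).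
Proof.
  split; [| split].
  - intros x. exists (neg x). reflexivity.
  - intros I x. symmetry. apply tjoin_negneg.
  - intros k x. symmetry. apply tact_negneg.
Qed.

Lemma negneg_surj (v : K) : test_set neg v -> exists x, neg (neg x) = v.
Proof. intros Hv. exists v. apply negneg_test, Hv. Qed.

Lemma test_equiv_fsup (I : Type) (x y : I -> K) :
  (forall i, test_equiv mul neg (x i) (y i)) ->
  test_equiv mul neg (fsup sup x) (fsup sup y).
Proof.
  intros Exy w Hw. unfold tact. rewrite !mul_fsupl.
  apply negneg_fsup_congr. intros i. apply (Exy i w Hw).
Qed.

Lemma test_equiv_mul (u v s t : K) :
  test_equiv mul neg u v -> test_equiv mul neg s t ->
  test_equiv mul neg (mul u s) (mul v t).
Proof.
  intros Euv Est w Hw.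
  rewrite !tact_mul, (Est w Hw).
  apply Euv. exists (neg (mul t w)). reflexivity.
Qed.

Theorem test_equiv_congruence :
  is_quantale_congruence sup mul (test_equiv mul neg).
Proof.
  split; [| split; [| split; [| split]]].
  - intros x w _. reflexivity.
  - intros x y Exy w Hw. symmetry. apply Exy, Hw.
  - intros x y z Exy Eyz w Hw. rewrite (Exy w Hw). apply Eyz, Hw.
  - exact test_equiv_fsup.
  - exact test_equiv_mul.
Qed.

End TestAlgebra.

Theorem proposition3p4 (K : Type) (le : K -> K -> Prop) (sup : (K -> Prop) -> K)
    (mul : K -> K -> K) (star : K -> K) (neg : K -> K) (e : K) :
  is_IGDA le sup mul star neg e ->
  (is_left_module_hom_to_tests sup mul neg (fun x => neg (neg x)) /\
   (forall v, test_set neg v -> exists x, neg (neg x) = v)) /\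
  is_quantale_congruence sup mul (test_equiv mul neg).
Proof.
  intros [[_ [mulA [_ [mul_fsupl [mul1l _]]]]] [neg_mul_negneg [neg_fsup_negneg _]]].
  split; [split |].
  - apply (negneg_module_hom K sup); assumption.
  - apply (negneg_surj K mul neg e); assumption.
  - apply (test_equiv_congruence K sup); assumption.
Qed.
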